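(* Let $L$ be a full intersection lattice such that $\hat 1\in\bullet(\mathrm{nti}(L))$, and let $T$ be a witnessing tree for this. Then $\mathrm{mult}_T(U)=-\mu_L(U,\hat 1)$ for every $U\in\mathrm{nti}(L)$.
   Context: A finite family $\mathcal{F}$ of sets is non-trivial if it is non-empty and no $X\in\mathcal{F}$ satisfies $X=\bigcup\mathcal{F}$. For such $\mathcal{F}$ and non-empty $\mathcal{T}\subseteq\mathcal{F}$, let $S_{\mathcal{T}}=\bigcap\mathcal{T}$, and let $S_\emptyset=\bigcup\mathcal{F}$. The intersection lattice of $\mathcal{F}$ is $\mathbb{L}_{\mathcal{F}}=(\{S_{\mathcal{T}}\mid\mathcal{T}\subseteq\mathcal{F}\},\subseteq)$, with greatest element $\hat 1=\bigcup\mathcal{F}$; an intersection lattice is one of this form. For $L=\mathbb{L}_{\mathcal{F}}$ and $x\in\hat 1$, let $\min_L(x)=S_{\{X\in\mathcal{F}\mid x\in X\}}$; $L$ is full if for every $U\in L$, $U\neq\hat 1$, there is $x\in\hat 1$ with $\min_L(x)=U$. The Möbius function of a finite poset $P$ is given for $x\le y$ by $\mu_P(y,y)=1$ and $\mu_P(x,y)=-\sum_{x<z\le y}\mu_P(z,y)$. Let $\mathrm{nti}(L)=\{U\in L\mid U\neq\hat 1\}$. For sets $A,B$, $A\,\dot\cup\,B=A\cup B$ is defined only when $A\cap B=\emptyset$, and $A\,\dot\setminus\,B=A\setminus B$ is defined only when $B\subseteq A$. For a finite family $\mathcal{G}$ of sets, $\bullet(\mathcal{G})$ is the smallest family of sets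 containing $\emptyset$ and every member of $\mathcal{G}$ and closed under well-defined disjoint unions and subset complements. A witnessing tree of $X\in\bullet(\mathcal{G})$ is a rooted ordered tree whose leaves are labelled by $\emptyset$ or by members of $\mathcal{G}$, and whose internal nodes are labelled $\dot\cup$ or $\dot\setminus$ ($\dot\setminus$-nodes being binary), such that evaluating each internal node as the corresponding operation on its children's values (in order) is always well defined and the root evaluates to $X$. For a leaf $\ell$ of $T$, its polarity $\mathrm{pol}_T(\ell)$ is $1$ if the path from the root to $\ell$ goes to the right (second) child of a $\dot\setminus$-node an even number of times, and $-1$ otherwise. For $U\in\mathcal{G}\cup\{\emptyset\}$, $\mathrm{mult}_T(U)=\sum_{\ell}\mathrm{pol}_T(\ell)$, the sum over leaves $\ell$ of $T$ labelled $U$. *)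

From HB Require Import structures.
From mathcomp Require Import all_boot all_order all_algebra.
From mathcomp Require Import boolp classical_sets.
Set Implicit Arguments. Unset Strict Implicit. Unset Printing Implicit Defensive.
Import Order.TTheory GRing.Theory Num.Theory.
Local Open Scope classical_set_scope.

(* A finite poset is given by the (duplicate-free) list P of its elements and
   its order relation le.  mobius_fuel implements the recursion
     mu(y,y) = 1,  mu(x,y) = - sum_{x < z <= y} mu(z,y);
   recursion depth size P suffices since strict chains have length < size P. *)
Fixpoint mobius_fuel (X : eqType) (P : seq X) (le : rel X) (k : nat) (x y : X)
  : int :=
  if x == y then 1%R else
  match k with
  | 0 => 0%R
  | k'.+1 => (- \sum_(z <- P | [&& le x z, z != x & le z y])
                 mobius_fuel P le k' z y)%R
  end.

Definition mobius (X : eqType) (P : seq X) (le : rel X) (x y : X) : int :=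
  mobius_fuel P le (size P) x y.

Section Family.
Variable T : Type.
Implicit Types (F G : seq (set T)) (A B U : set T).

Definition famU F : set T := [set x | exists2 X, X \in F & X x].
Definition famI F : set T := [set x | forall X, X \in F -> X x].

Definition nontrivial F : Prop :=
  F <> [::] /\ forall X, X \in F -> X <> famU F.

Definition S_of F (Tsub : seq (set T)) : set T :=
  if Tsub is [::] then famU F else famI Tsub.

Definition inL F U : Prop := exists m : bitseq, U = S_of F (mask m F).

Definition Lelems F : seq (set T) :=
  undup [seq S_of F (mask (m : (size F).-tuple bool) F) | m <- enum {: (size F).-tuple bool}].

Definition subset_rel : rel (set T) := fun A B => `[< A `<=` B >].

Definition muL F (U V : set T) : int := mobius (Lelems F) subset_rel U V.

Definition ntiL F U : Prop := inL F U /\ U <> famU F.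

Definition minL F (x : T) : set T := S_of F [seq X <- F | `[< X x >]].

Definition full_lattice F : Prop :=
  forall U, ntiL F U -> exists2 x, famU F x & minL F x = U.

Inductive bullet (G : set T -> Prop) : set T -> Prop :=
| bullet0 : bullet G set0
| bulletG A : G A -> bullet G A
| bulletU A B : bullet G A -> bullet G B -> A `&` B = set0 -> bullet G (A `|` B)
| bulletD A B : bullet G A -> bullet G B -> B `<=` A -> bullet G (A `\` B).

End Family.

(* rooted ordered trees: leaves carry a set label; internal nodes are
   disjoint-union nodes (with an ordered list of children) or binary
   subset-complement nodes (left child \ right child). *)
Inductive wtree (T : Type) :=
| Leaf of set T
| DUnion of seq (wtree T)
| DDiff of wtree T & wtree T.
Arguments Leaf {T}. Arguments DUnion {T}. Arguments DDiff {T}.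

Section Trees.
Variable T : Type.

Definition pw_disjoint (l : seq (set T)) : Prop :=
  forall i j, (i < j < size l)%N -> nth set0 l i `&` nth set0 l j = set0.

(* value of a tree (meaningful when the evaluation is well defined) *)
Fixpoint tval (t : wtree T) : set T :=
  match t with
  | Leaf A => A
  | DUnion ts => \big[setU/set0]_(s <- map tval ts) s
  | DDiff a b => tval a `\` tval b
  end.

Fixpoint twf (G : set T -> Prop) (t : wtree T) : Prop :=
  match t with
  | Leaf A => A = set0 \/ G A
  | DUnion ts => ts <> [::] /\ pw_disjoint (map tval ts) /\
                 (fix all_wf (l : seq (wtree T)) : Prop :=
                    match l with [::] => True | u :: l' => twf G u /\ all_wf l' end) ts
  | DDiff a b => twf G a /\ twf G b /\ tval b `<=` tval a
  end.

Definition witnessing (G : set T -> Prop) (t : wtree T) (X : set T) : Prop :=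
  twf G t /\ tval t = X.

Fixpoint leaves_pol (t : wtree T) : seq (set T * int) :=
  match t with
  | Leaf A => [:: (A, 1%R)]
  | DUnion ts => flatten (map leaves_pol ts)
  | DDiff a b => leaves_pol a ++ [seq (p.1, (- p.2)%R) | p <- leaves_pol b]
  end.

Definition multT (t : wtree T) (U : set T) : int :=
  (\sum_(p <- leaves_pol t | p.1 == U) p.2)%R.

End Trees.

From Pilot Require Import Defs.
From HB Require Import structures.
From mathcomp Require Import all_boot all_order all_algebra.
From mathcomp Require Import boolp classical_sets.
From Stdlib Require List.
(* Re-imported so that [tval] denotes tree evaluation, not the tuple projection. *)
Import Defs.
Set Implicit Arguments. Unset Strict Implicit. Unset Printing Implicit Defensive.
Import Order.TTheory GRing.Theory Num.Theory.
Local Open Scope classical_set_scope.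
Local Open Scope ring_scope.

(* Evaluated pointwise, the indicator of the value of a witnessing tree is the
   signed sum of the indicators of its leaf labels: on [\hat 1] we get
   [1 = \sum_W mult_T(W) 1_W(x)], with [W] ranging over [L].  By fullness every
   [V] in nti(L) is [min_L(x)] for some [x], and for such [x] we have [x \in W]
   iff [V <= W]; hence [\sum_(W >= V) mult_T(W) = 1].  No leaf is labelled
   [\hat 1], so [mult_T(\hat 1) = 0], and [W |-> [W = \hat 1] - mult_T(W)]
   satisfies the recursion defining [mu_L(-, \hat 1)]. *)

Lemma count_lt_subpred (X : eqType) (a b : pred X) (s : seq X) (w : X) :
  subpred a b -> w \in s -> b w -> ~~ a w -> (count a s < count b s)%N.
Proof.
move=> ab + bw naw; elim: s => //= u s IH; rewrite inE => /predU1P [<-|/IH lt_ab].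
  by rewrite bw (negbTE naw) add0n add1n ltnS sub_count.
by rewrite -addnS leq_add //; case: (a u) (ab u) => // /(_ isT) ->.
Qed.

Lemma sum_delta_seq (X : eqType) (R : pzSemiRingType) (r : seq X) (P : pred X) (y : X) :
  uniq r -> y \in r -> P y -> \sum_(x <- r | P x) ((x == y)%:R : R) = 1.
Proof.
move=> r_uniq yr Py; rewrite (big_rem y) //= Py eqxx big1_seq ?addr0 // => x.
by rewrite mem_rem_uniq // => /andP [_ /andP [/negbTE -> _]].
Qed.

Lemma sum_regroup (X : eqType) (R : pzRingType) (s : seq (X * R)) (r : seq X) (f : X -> R) :
  uniq r -> (forall p, p \in s -> p.1 \in r \/ f p.1 = 0) ->
  \sum_(p <- s) p.2 * f p.1 = \sum_(W <- r) (\sum_(p <- s | p.1 == W) p.2) * f W.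
Proof.
move=> r_uniq s_r; under [RHS]eq_bigr do rewrite mulr_suml.
rewrite (exchange_big_dep xpredT) //= big_seq [RHS]big_seq; apply: eq_bigr => p ps.
rewrite (eq_bigl (pred1 p.1)); last by move=> W; rewrite eq_sym.
have [p1r|fp0] := s_r p ps.
  by rewrite -big_filter filter_pred1_uniq // big_seq1.
by rewrite fp0 mulr0 big1 // => W /eqP ->; rewrite fp0 mulr0.
Qed.

Section MobiusRecursion.
Variables (X : eqType) (P : seq X) (le : rel X).
Hypotheses (P_uniq : uniq P) (le_refl : reflexive le) (le_anti : antisymmetric le)
  (le_trans : transitive le).

Let above x := [pred z | le x z && (z != x)].

Lemma count_above_lt x z : z \in P -> le x z -> z != x ->
  (count (above z) P < count (above x) P)%N.
Proof.
move=> zP xz zx; apply: (count_lt_subpred (w := z)) => //=; last by rewrite eqxx andbF.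
- move=> w /andP [zw wz] /=; rewrite (le_trans xz zw); apply: contraNneq wz => wx.
  by rewrite wx in zw *; apply/eqP/le_anti; rewrite xz zw.
- by rewrite xz zx.
Qed.

Variables (y : X) (g : X -> int).
Hypotheses (gy : g y = 1)
  (g_sum : forall x, x \in P -> x != y -> le x y ->
     \sum_(z <- P | le x z && le z y) g z = 0).

Lemma mobius_fuel_solution k x : x \in P -> le x y ->
  (count (above x) P < k)%N -> mobius_fuel P le k x y = g x.
Proof.
elim: k x => // k IH x xP xy; rewrite ltnS => above_k /=.
have [->|xNy] := eqVneq x y; first by rewrite gy.
have := g_sum xP xNy xy; rewrite (big_rem x) //= le_refl xy rem_filter // big_filter_cond.
move/eqP; rewrite addr_eq0 => /eqP ->; congr (- _).
rewrite big_seq_cond [RHS]big_seq_cond.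
apply: eq_big => [z|z /andP [zP /and3P [xz zx zy]]]; first by rewrite /= [le x z && _]andbCA.
by rewrite IH // (leq_trans (count_above_lt zP xz zx)).
Qed.

Lemma mobius_solution x : x \in P -> le x y -> mobius P le x y = g x.
Proof.
move=> xP xy; apply: mobius_fuel_solution => //; rewrite -count_predT.
by apply: (count_lt_subpred (w := x)) => //=; rewrite eqxx andbF.
Qed.

End MobiusRecursion.

Section Indicator.
Variable T : Type.
Implicit Types (A B : set T) (x : T).

Definition indic A x : int := (x \in A)%:R.

Lemma indic0 x : indic set0 x = 0.
Proof. by rewrite /indic in_set0. Qed.

Lemma indicU A B x : A `&` B = set0 -> indic (A `|` B) x = indic A x + indic B x.
Proof.
move=> AB0; have : ~~ ((x \in A) && (x \in B)) by rewrite -in_setI AB0 in_set0.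
by rewrite /indic in_setU; case: (x \in A); case: (x \in B).
Qed.

Lemma indicD A B x : B `<=` A -> indic (A `\` B) x = indic A x - indic B x.
Proof.
move=> BA; have : (x \in B) ==> (x \in A) by apply/implyP => /set_mem/BA/mem_set.
by rewrite /indic in_setD; case: (x \in A); case: (x \in B); rewrite ?subrr ?subr0.
Qed.

Lemma indic_bigU (l : seq (set T)) x : pw_disjoint l ->
  indic (\big[setU/set0]_(s <- l) s) x = \sum_(s <- l) indic s x.
Proof.
elim: l => [|A l IH] l_disj; first by rewrite !big_nil indic0.
rewrite !big_cons indicU ?IH //.
  by move=> i j ij; apply: (l_disj i.+1 j.+1).
rewrite -bigcup_seq setI_bigcupr; apply: bigcup0 => s /= sl.
by rewrite -(nth_index set0 sl); apply: (l_disj 0%N (index s l).+1); rewrite /= ltnS index_mem.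
Qed.

End Indicator.

Section WitnessingTrees.
Variable T : Type.
Implicit Types (G : set T -> Prop) (t : wtree T) (ts : seq (wtree T)).

Section Induction.
Variable P : wtree T -> Prop.
Hypotheses (P_Leaf : forall A, P (Leaf A))
  (P_DUnion : forall ts, List.Forall P ts -> P (DUnion ts))
  (P_DDiff : forall a b, P a -> P b -> P (DDiff a b)).

Fixpoint wtree_ind_Forall t : P t :=
  match t with
  | Leaf A => P_Leaf A
  | DUnion ts => P_DUnion
      ((fix all_P ts : List.Forall P ts :=
          if ts is u :: ts' then List.Forall_cons u (wtree_ind_Forall u) (all_P ts')
          else List.Forall_nil P) ts)
  | DDiff a b => P_DDiff (wtree_ind_Forall a) (wtree_ind_Forall b)
  end.

End Induction.

Lemma twf_DUnion G ts : twf G (DUnion ts) ->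
  pw_disjoint (map (@tval T) ts) /\ List.Forall (twf G) ts.
Proof.
case=> _ [ts_disj ts_wf]; split => //.
by elim: ts ts_wf {ts_disj} => //= u ts IH [u_wf ts_wf]; constructor; last exact: IH.
Qed.

Lemma indic_tval G t x : twf G t ->
  indic (tval t) x = \sum_(p <- leaves_pol t) p.2 * indic p.1 x.
Proof.
elim/wtree_ind_Forall: t => [A _|ts IH /twf_DUnion [ts_disj ts_wf]|a b IHa IHb].
- by rewrite big_seq1 mul1r.
- rewrite /= indic_bigU // big_map big_flatten big_map.
  elim: ts IH ts_wf {ts_disj} => [|u ts IHts]; first by rewrite !big_nil.
  move=> /List.Forall_cons_iff [IHu IH] /List.Forall_cons_iff [u_wf ts_wf].
  by rewrite !big_cons IHu // IHts.
- move=> [a_wf [b_wf ba]]; rewrite /= indicD // IHa // IHb // big_cat big_map -sumrN.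
  by congr (_ + _); apply: eq_bigr => p _; rewrite mulNr.
Qed.

Lemma leaves_pol_label G t p : twf G t -> p \in leaves_pol t -> p.1 = set0 \/ G p.1.
Proof.
elim/wtree_ind_Forall: t p => [A|ts IH|a b IHa IHb] p.
- by move=> A_wf; rewrite inE => /eqP ->.
- move=> /twf_DUnion [_ ts_wf]; rewrite /=.
  elim: ts IH ts_wf => [|u ts IHts] //.
  move=> /List.Forall_cons_iff [IHu IH] /List.Forall_cons_iff [u_wf ts_wf].
  by rewrite /= mem_cat => /orP [/IHu|/IHts]; apply.
- move=> [a_wf [b_wf _]]; rewrite /= mem_cat => /orP [/IHa|/mapP [q /IHb q_lab ->]].
  + exact.
  + exact: q_lab.
Qed.

Lemma indic_tval_mult G t (r : seq (set T)) x : twf G t -> uniq r ->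
  (forall A, G A -> A \in r) ->
  indic (tval t) x = \sum_(W <- r) multT t W * indic W x.
Proof.
move=> t_wf r_uniq Gr; rewrite (indic_tval _ t_wf); apply: sum_regroup => // p.
by move/(leaves_pol_label t_wf) => [->|/Gr]; [right; exact: indic0 | left].
Qed.

End WitnessingTrees.

Section SubsetOrder.
Variable T : Type.

Lemma subset_relP (A B : set T) : reflect (A `<=` B) (subset_rel A B).
Proof. exact: asboolP. Qed.

Lemma subset_rel_refl : reflexive (@subset_rel T).
Proof. by move=> A; apply/subset_relP. Qed.

Lemma subset_rel_anti : antisymmetric (@subset_rel T).
Proof. by move=> A B /andP [/subset_relP AB /subset_relP BA]; rewrite eqEsubset. Qed.

Lemma subset_rel_trans : transitive (@subset_rel T).
Proof.
by move=> B A C /subset_relP AB /subset_relP BC; apply/subset_relP/(subset_trans AB).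
Qed.

End SubsetOrder.

Section IntersectionLattice.
Variables (T : Type) (F : seq (set T)).

Lemma S_of_sub_famU l : {subset l <= F} -> S_of F l `<=` famU F.
Proof.
case: l => [_|X l lF z Xl_z] //; exists X; first by rewrite lF ?mem_head.
by apply: Xl_z; rewrite mem_head.
Qed.

Lemma mem_Lelems U : U \in Lelems F <-> inL F U.
Proof.
split; first by rewrite mem_undup => /mapP [m _ ->]; exists (val m).
case=> m ->; have [m' /eqP m'_size ->] := resize_mask m F.
by rewrite mem_undup; apply/mapP; exists (Tuple m'_size); rewrite ?mem_enum.
Qed.

Lemma Lelems_sub_famU U : U \in Lelems F -> U `<=` famU F.
Proof. by case/mem_Lelems => m ->; apply: S_of_sub_famU => X /mem_mask. Qed.

Lemma ntiL_Lelems U : ntiL F U -> U \in Lelems F.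
Proof. by case=> /mem_Lelems. Qed.

Lemma famU_Lelems : famU F \in Lelems F.
Proof. by apply/mem_Lelems; exists [::]. Qed.

Lemma minL_self x : famU F x -> minL F x x.
Proof.
rewrite /minL; case E: [seq X <- F | `[< X x >]] => [|Y l] //= _ X.
by rewrite -E mem_filter => /andP [/asboolP].
Qed.

Lemma in_Lelems_minL x U : famU F x -> U \in Lelems F ->
  (x \in U) = subset_rel (minL F x) U.
Proof.
move=> Fx /mem_Lelems [m ->]; apply/idP/subset_relP => [/set_mem|]; last first.
  by move=> minU; apply/mem_set/minU/minL_self.
have : {subset mask m F <= F} by move=> X; apply: mem_mask.
case: (mask m F) => [|X l] lF.
  by move=> _; apply/S_of_sub_famU => X; rewrite mem_filter => /andP [].
move=> Xl_x z; have Xl_min W : W \in X :: l -> W \in [seq Y <- F | `[< Y x >]].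
  by move=> Wl; rewrite mem_filter lF // andbT; apply/asboolP; exact: Xl_x.
rewrite /minL; case: [seq Y <- F | _] Xl_min => [/(_ X (mem_head _ _)) //|Y l' Xl_min].
by move=> minz W Wl; apply: minz (Xl_min W Wl).
Qed.

End IntersectionLattice.

Section Multiplicities.
Variables (T : Type) (F : seq (set T)) (t : wtree T).
Hypotheses (F_full : full_lattice F) (t_wit : witnessing (ntiL F) t (famU F)).

Lemma multT_famU : famU F !=set0 -> multT t (famU F) = 0.
Proof.
case: t_wit => t_wf _ [x Fx]; rewrite /multT big1_seq // => p /andP [/eqP p_top p_leaf].
have [p0|[_ pNtop]] := leaves_pol_label t_wf p_leaf; last by [].
by move: Fx; rewrite -p_top p0.
Qed.

Lemma sum_multT_above V : ntiL F V ->
  \sum_(W <- Lelems F | subset_rel V W) multT t W = 1.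
Proof.
case: t_wit => t_wf tvalE V_nti; have [x Fx minx] := F_full V_nti.
have := indic_tval_mult x t_wf (undup_uniq _) (@ntiL_Lelems _ F).
rewrite tvalE /indic mem_set //= mulr1n => ->.
rewrite big_mkcond big_seq [RHS]big_seq; apply: eq_bigr => W WL.
by rewrite (in_Lelems_minL Fx WL) minx; case: ifP; rewrite ?mulr1 ?mulr0.
Qed.

Lemma sum_delta_sub_multT V : V \in Lelems F -> V != famU F ->
  \sum_(W <- Lelems F | subset_rel V W && subset_rel W (famU F))
     ((W == famU F)%:R - multT t W) = 0.
Proof.
move=> VL VNtop; rewrite big_seq_cond.
rewrite (eq_bigl (fun W => (W \in Lelems F) && subset_rel V W)); last first.
  move=> W; case WL: (W \in Lelems F) => //=.
  by have /subset_relP -> := Lelems_sub_famU WL; rewrite andbT.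
rewrite -big_seq_cond sumrB sum_delta_seq ?undup_uniq ?famU_Lelems ?sum_multT_above ?subrr //.
  by split; [apply/mem_Lelems | apply/eqP].
exact/subset_relP/Lelems_sub_famU.
Qed.

End Multiplicities.

Theorem proposition4p7 (T : Type) (F : seq (set T)) :
  nontrivial F -> full_lattice F ->
  bullet (ntiL F) (famU F) ->
  forall t : wtree T, witnessing (ntiL F) t (famU F) ->
  forall U : set T, ntiL F U -> multT t U = (- muL F U (famU F))%R.
Proof.
move=> _ F_full _ t t_wit U U_nti.
have [x Fx _] := F_full U U_nti.
pose g W := (W == famU F)%:R - multT t W.
have g_top : g (famU F) = 1.
  by rewrite /g eqxx (multT_famU t_wit) ?subr0 //; exists x.
have g_sum V : V \in Lelems F -> V != famU F -> subset_rel V (famU F) ->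
    \sum_(W <- Lelems F | subset_rel V W && subset_rel W (famU F)) g W = 0.
  by move=> VL VNtop _; apply: sum_delta_sub_multT.
rewrite /muL (mobius_solution (undup_uniq _) (@subset_rel_refl T)
  (@subset_rel_anti T) (@subset_rel_trans T) g_top g_sum (ntiL_Lelems U_nti)).
  by rewrite /g (introF eqP (proj2 U_nti)) sub0r opprK.
exact/subset_relP/Lelems_sub_famU/ntiL_Lelems.
Qed.
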